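(* Let $f:\mathcal{S}\to\mathbb{R}$ be continuously differentiable with $f^{\inf}:=\inf_{X\in\mathcal{S}}f(X)>-\infty$, and suppose $f$ is layer-wise $(L^0,L^1)$-smooth with constants $L^0=(L^0_1,\dots,L^0_p)\in\mathbb{R}^p_+$ and $L^1=(L^1_1,\dots,L^1_p)$ with $L^1_i>0$ for all $i$. Fix $\varepsilon>0$ and let $X^0,X^1,\dots$ be the iterates of deterministic Gluon run from $X^0$ with radii $$t_i^k=\frac{\|\nabla_i f(X^k)\|_{(i)\star}}{L^0_i+L^1_i\|\nabla_i f(X^k)\|_{(i)\star}}$$ (with $t_i^k:=0$, i.e. $X_i^{k+1}=X_i^k$, whenever $\nabla_i f(X^k)=0$). Let $\Delta^0:=f(X^0)-f^{\inf}$, $H:=\frac1p\sum_{j=1}^p \frac{1}{L^1_j}$, and $$K:=\left\lceil \frac{2\Delta^0\sum_{i=1}^p \frac{L^0_i}{(L^1_i)^2}}{\varepsilon^2 H^2}+\frac{2\Delta^0}{\varepsilon H}\right\rceil .$$ Then, provided $K\ge 1$, $$\min_{k=0,\dots,K-1}\ \sum_{i=1}^p \frac{1/L^1_i}{H}\,\|\nabla_i f(X^k)\|_{(i)\star}\le\varepsilon .$$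
   Context: $\mathcal{S}=\mathcal{S}_1\times\cdots\times\mathcal{S}_p$ with $\mathcal{S}_i=\mathbb{R}^{m_i\times n_i}$; an element is written $X=[X_1,\dots,X_p]$. Each $\mathcal{S}_i$ carries the trace inner product $\langle X_i,Y_i\rangle_{(i)}=\operatorname{tr}(X_i^\top Y_i)$ and an arbitrary norm $\|\cdot\|_{(i)}$ with dual norm $\|Y_i\|_{(i)\star}=\sup_{\|Z_i\|_{(i)}\le 1}\langle Y_i,Z_i\rangle_{(i)}$. $\nabla_i f(X)\in\mathcal{S}_i$ denotes the block of the gradient of $f$ corresponding to $X_i$ (w.r.t. the sum of trace inner products). Layer-wise $(L^0,L^1)$-smoothness: for all $i$ and all $X,Y\in\mathcal{S}$, $\|\nabla_i f(X)-\nabla_i f(Y)\|_{(i)\star}\le (L^0_i+L^1_i\|\nabla_i f(X)\|_{(i)\star})\|X_i-Y_i\|_{(i)}$. Deterministic Gluon: for $k=0,1,\dots$ and each $i=1,\dots,p$, given radius $t_i^k\ge0$, set $X_i^{k+1}\in\arg\min\{\langle \nabla_i f(X^k),X_i\rangle_{(i)}: X_i\in\mathcal{S}_i,\ \|X_i-X_i^k\|_{(i)}\le t_i^k\}$ (any minimizer), and $X^{k+1}=[X_1^{k+1},\dots,X_p^{k+1}]$. *)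

From mathcomp Require Import all_boot all_order all_algebra.
From mathcomp Require Import all_classical all_reals.
Set Implicit Arguments. Unset Strict Implicit. Unset Printing Implicit Defensive.
Import Order.TTheory GRing.Theory Num.Theory.
Local Open Scope ring_scope.
Local Open Scope classical_set_scope.

Definition prodS (R : realType) (p : nat) (m n : 'I_p -> nat) : Type :=
  forall i : 'I_p, 'M[R]_(m i, n i).

Section Defs.
Variables (R : realType) (p : nat) (m n : 'I_p -> nat).
Local Notation S := (prodS R m n).

Definition addS (X Y : S) : S := fun i => X i + Y i.
Definition subS (X Y : S) : S := fun i => X i - Y i.

Definition ipS (X Y : S) : R := \sum_(i < p) \tr ((X i)^T *m Y i).

(* a reference norm on S (all norms on the finite-dim. S are equivalent),
   used only to express differentiability / continuity *)
Definition nS (X : S) : R :=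
  \sum_(i < p) \sum_(a < m i) \sum_(b < n i) `|X i a b|.

Definition is_gradient (f : S -> R) (g : S -> S) : Prop :=
  forall X : S, forall eps : R, 0 < eps ->
    exists2 d : R, 0 < d & forall H : S, nS H < d ->
      `|f (addS X H) - f X - ipS (g X) H| <= eps * nS H.

Definition continuousS (g : S -> S) : Prop :=
  forall X : S, forall eps : R, 0 < eps ->
    exists2 d : R, 0 < d & forall Y : S, nS (subS Y X) < d ->
      nS (subS (g Y) (g X)) < eps.

Definition C1_with_gradient (f : S -> R) (g : S -> S) : Prop :=
  is_gradient f g /\ continuousS g.
End Defs.

Definition is_norm (R : realType) (a b : nat) (N : 'M[R]_(a, b) -> R) : Prop :=
  (forall X, N X = 0 -> X = 0) /\
  (forall (c : R) X, N (c *: X) = `|c| * N X) /\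
  (forall X Y, N (X + Y) <= N X + N Y).

Definition dual_norm (R : realType) (a b : nat) (N : 'M[R]_(a, b) -> R)
  (Y : 'M[R]_(a, b)) : R :=
  sup [set \tr (Y^T *m Z) | Z in [set Z : 'M[R]_(a, b) | N Z <= 1]].

Definition layerwise_L0L1_smooth (R : realType) (p : nat) (m n : 'I_p -> nat)
  (N : forall i : 'I_p, 'M[R]_(m i, n i) -> R) (g : prodS R m n -> prodS R m n)
  (L0 L1 : 'I_p -> R) : Prop :=
  forall (i : 'I_p) (X Y : prodS R m n),
    dual_norm (N i) (g X i - g Y i)
      <= (L0 i + L1 i * dual_norm (N i) (g X i)) * N i (X i - Y i).

Definition gluon_radius (R : realType) (a b : nat) (N : 'M[R]_(a, b) -> R)
  (G : 'M[R]_(a, b)) (l0 l1 : R) : R :=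
  if G == 0 then 0 else dual_norm N G / (l0 + l1 * dual_norm N G).

Definition lmo_step (R : realType) (a b : nat) (N : 'M[R]_(a, b) -> R)
  (G X_old X_new : 'M[R]_(a, b)) (t : R) : Prop :=
  N (X_new - X_old) <= t /\
  forall Z : 'M[R]_(a, b), N (Z - X_old) <= t ->
    \tr (G^T *m X_new) <= \tr (G^T *m Z).

Definition gluon_iterates (R : realType) (p : nat) (m n : 'I_p -> nat)
  (N : forall i : 'I_p, 'M[R]_(m i, n i) -> R) (g : prodS R m n -> prodS R m n)
  (L0 L1 : 'I_p -> R) (Xs : nat -> prodS R m n) : Prop :=
  forall (k : nat) (i : 'I_p),
    lmo_step (N i) (g (Xs k) i) (Xs k i) (Xs k.+1 i)
      (gluon_radius (N i) (g (Xs k) i) (L0 i) (L1 i)).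

From mathcomp Require Import all_boot all_order all_algebra.
From mathcomp Require Import all_classical all_reals.
From mathcomp Require Import topology normedtype derive.
From mathcomp Require Import ring lra.
Import Order.TTheory GRing.Theory Num.Theory numFieldNormedType.Exports.
Set Implicit Arguments. Unset Strict Implicit. Unset Printing Implicit Defensive.
Local Open Scope ring_scope.
Local Open Scope classical_set_scope.

(* Each block update of Gluon minimises a linear function over a norm ball, so
   its linear decrease is t_i ||grad_i f||_*.  Integrating the layer-wise
   (L0,L1)-smoothness along the segment of the step gives the descent lemma
   f(X + D) <= f(X) + <grad f(X), D> + sum_i (L0_i + L1_i a_i) ||D_i||^2 / 2,
   with a_i = ||grad_i f(X)||_*, and the chosen radii turn the two terms into a
   decrease of (1/2) sum_i a_i^2 / (L0_i + L1_i a_i).  The tangent bound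
   a^2 / b >= 2 mu a - mu^2 b with mu_i = lambda / L1_i shows that this is at
   least c = (H eps)^2 / (2 (A + H eps)), A = sum_i L0_i / L1_i^2, as long as
   the weighted gradient norm exceeds eps; since K = ceil (Delta0 / c), K such
   steps would push f below its infimum. *)

Section NormFacts.
Variables (R : realType) (a b : nat) (N : 'M[R]_(a, b) -> R).
Hypothesis normN : is_norm N.

Lemma is_normZ (c : R) X : N (c *: X) = `|c| * N X.
Proof. by case: normN => _ []. Qed.

Lemma is_normD X Y : N (X + Y) <= N X + N Y.
Proof. by case: normN => _ []. Qed.

Lemma is_norm_eq0 X : N X = 0 -> X = 0.
Proof. by case: normN => /(_ X). Qed.

Lemma is_norm0 : N 0 = 0.
Proof. by rewrite -(scale0r 0) is_normZ normr0 mul0r. Qed.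

Lemma is_normN X : N (- X) = N X.
Proof. by rewrite -scaleN1r is_normZ normrN normr1 mul1r. Qed.

Lemma is_norm_ge0 X : 0 <= N X.
Proof.
have := is_normD X (- X); rewrite subrr is_norm0 is_normN -mulr2n.
by rewrite pmulrn_lge0.
Qed.

Lemma is_norm_gt0 X : X != 0 -> 0 < N X.
Proof.
move=> X0; rewrite lt_def is_norm_ge0 andbT.
by apply: contra X0 => /eqP/is_norm_eq0->.
Qed.

Lemma is_norm_sum (I : finType) (F : I -> 'M[R]_(a, b)) :
  N (\sum_i F i) <= \sum_i N (F i).
Proof.
apply: (big_ind2 (fun X y => N X <= y)) => // [|X1 X2 y1 y2 h1 h2].
  by rewrite is_norm0.
exact: le_trans (is_normD _ _) (lerD h1 h2).
Qed.

Lemma is_norm_dist_dist X Y : `|N X - N Y| <= N (X - Y).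
Proof.
have tri U V : N U - N V <= N (U - V).
  by rewrite lerBlDr; apply: le_trans (is_normD _ _); rewrite subrK.
by rewrite ler_norml tri andbT lerNl opprB -[X - Y]opprB is_normN tri.
Qed.

End NormFacts.

Lemma mx_norm_entry (R : realType) a b (X : 'M[R]_(a, b)) i j : `|X i j| <= `|X|.
Proof.
have -> : `|X| = mx_norm X by [].
rewrite mx_normrE.
exact: (le_bigmax _ (fun ij : 'I_a * 'I_b => `|X ij.1 ij.2|) (i, j)).
Qed.

Section NormEquivalence.
Variables (R : realType) (a b : nat) (N : 'M[R]_(a, b) -> R).
Hypothesis normN : is_norm N.

Lemma is_norm_le_mx_norm : exists2 M, 0 <= M & forall X, N X <= M * `|X|.
Proof.
exists (\sum_i \sum_j N (delta_mx i j)) => [|X].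
  by do 2 (apply: sumr_ge0 => ? _); exact: is_norm_ge0.
rewrite {1}(matrix_sum_delta X) mulr_suml.
apply: le_trans (is_norm_sum normN _) _; apply: ler_sum => i _.
rewrite mulr_suml; apply: le_trans (is_norm_sum normN _) _; apply: ler_sum => j _.
rewrite is_normZ // mulrC ler_wpM2l ?is_norm_ge0 //.
exact: mx_norm_entry.
Qed.

Lemma is_norm_continuous : continuous N.
Proof.
have [M M0 NM] := is_norm_le_mx_norm.
have M1 : 0 < M + 1 by rewrite ltr_wpDl.
move=> X A /= /(nbhs_ballP (N X)) [e e0 eA].
apply/nbhs_ballP; exists (e / (M + 1)); first by rewrite /= divr_gt0.
move=> Y; rewrite -!ball_normE /ball_ /= ltr_pdivlMr // => XY; apply: eA.
rewrite -ball_normE /ball_ /=.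
apply: le_lt_trans (is_norm_dist_dist normN _ _) _; apply: le_lt_trans (NM _) _.
by apply: le_lt_trans XY; rewrite mulrC ler_wpM2l ?lerDl.
Qed.

End NormEquivalence.

(* Compactness of the unit sphere is available for row vectors only, hence the
   detour through mxvec in is_norm_entry_lb. *)
Lemma is_norm_rV_lb (R : realType) k (N : 'rV[R]_k -> R) : is_norm N ->
  exists2 c, 0 < c & forall v, c * `|v| <= N v.
Proof.
move=> normN; pose sphere := [set v : 'rV[R]_k | `|v| = 1].
have normalize (v : 'rV[R]_k) : v != 0 -> `|(`|v|^-1 *: v)| = 1.
  by move=> v0; rewrite normrZ normrV ?unitfE ?normr_eq0 // normr_id mulVf // normr_eq0.
have [[u su]|sphere0] := pselect (sphere !=set0); last first.
  exists 1 => // v; rewrite mul1r.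
  have [->|v0] := eqVneq v 0; first by rewrite normr0 is_norm0.
  by exfalso; apply: sphere0; exists (`|v|^-1 *: v); exact: normalize.
have sphere_compact : compact sphere.
  apply: bounded_closed_compact.
    by exists 1; split => // M M1 x /= ->; exact: ltW.
  have -> : sphere = (fun v : 'rV[R]_k => `|v|) @^-1` [set 1] by [].
  apply: preimage_closed; last exact: closed_eq.
  by move=> x _; exact: norm_continuous.
have [c0 /[!inE] c0s c0min] := EVT_min_rV (ex_intro _ u su) sphere_compact
  (continuous_subspaceT (is_norm_continuous normN)).
have c0_gt0 : 0 < N c0.
  apply: is_norm_gt0 => //; apply/eqP => c00.
  by move: c0s; rewrite c00 normr0 => /eqP; rewrite eq_sym oner_eq0.
exists (N c0) => // v; have [->|v0] := eqVneq v 0; first by rewrite normr0 mulr0 is_norm0.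
have := c0min (`|v|^-1 *: v); rewrite inE /= normalize // => /(_ erefl).
by rewrite is_normZ // normfV normr_id ler_pdivlMl ?normr_gt0 // mulrC.
Qed.

Lemma is_norm_entry_lb (R : realType) a b (N : 'M[R]_(a, b) -> R) : is_norm N ->
  exists2 c : R, 0 < c & forall (Z : 'M[R]_(a, b)) i j, c * `|Z i j| <= N Z.
Proof.
move=> normN.
have normNvec : is_norm (fun v : 'rV[R]_(a * b) => N (vec_mx v)).
  split; [|split] => [v /(is_norm_eq0 normN) v0|c v|v w].
  - by rewrite -(vec_mxK v) v0 linear0.
  - by rewrite linearZ is_normZ.
  - by rewrite linearD is_normD.
have [c c0 Hc] := is_norm_rV_lb normNvec.
exists c => // Z i j; rewrite -mxvecE.
have := Hc (mxvec Z); rewrite mxvecK; apply: le_trans; rewrite ler_wpM2l ?(ltW c0)//.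
exact: mx_norm_entry.
Qed.

Lemma mxtrace_trmx_mul (R : realType) a b (Y Z : 'M[R]_(a, b)) :
  \tr (Y^T *m Z) = \sum_i \sum_k Y k i * Z k i.
Proof.
by apply: eq_bigr => i _; rewrite mxE; apply: eq_bigr => k _; rewrite mxE.
Qed.

Section DualNorm.
Variables (R : realType) (a b : nat) (N : 'M[R]_(a, b) -> R).
Hypothesis normN : is_norm N.

Let ball1 := [set Z : 'M[R]_(a, b) | N Z <= 1].

Lemma ball1_0 : ball1 0.
Proof. by rewrite /ball1 /= is_norm0. Qed.

Lemma has_sup_dual_norm Y : has_sup [set \tr (Y^T *m Z) | Z in ball1].
Proof.
split; first by exists (\tr (Y^T *m 0)), 0 => //; exact: ball1_0.
have [c c0 Hc] := is_norm_entry_lb normN.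
exists (\sum_i \sum_k `|Y k i| / c) => _ [Z /= NZ <-].
rewrite mxtrace_trmx_mul; apply: ler_sum => i _; apply: ler_sum => k _.
apply: le_trans (ler_norm _) _; rewrite normrM ler_wpM2l //.
by rewrite -div1r ler_pdivlMr // mulrC; apply: le_trans (Hc _ _ _) NZ.
Qed.

Lemma dual_norm_ge0 Y : 0 <= dual_norm N Y.
Proof.
apply: sup_upper_bound; first exact: has_sup_dual_norm.
by exists 0; [exact: ball1_0 | rewrite mulmx0 mxtrace0].
Qed.

Lemma dual_norm0 : dual_norm N 0 = 0.
Proof.
apply/eqP; rewrite eq_le dual_norm_ge0 andbT; apply: ge_sup.
  by exists 0, 0; [exact: ball1_0 | rewrite mulmx0 mxtrace0].
by move=> _ [Z _ <-]; rewrite trmx0 mul0mx mxtrace0.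
Qed.

Lemma mxtrace_le_dual_norm Y D : \tr (Y^T *m D) <= dual_norm N Y * N D.
Proof.
have [->|D0] := eqVneq D 0; first by rewrite mulmx0 mxtrace0 is_norm0 // mulr0.
have ND := is_norm_gt0 normN D0.
have D1 : ball1 ((N D)^-1 *: D).
  by rewrite /ball1 /= is_normZ // gtr0_norm ?invr_gt0 // mulVf ?gt_eqF.
have := sup_upper_bound (has_sup_dual_norm Y) (ex_intro2 _ _ _ D1 erefl).
by rewrite -scalemxAr mxtraceZ mulrC -ler_pdivrMr.
Qed.

Lemma lmo_step_mxtrace G Xo Xn t : 0 <= t -> lmo_step N G Xo Xn t ->
  \tr (G^T *m (Xn - Xo)) <= - (t * dual_norm N G).
Proof.
move=> t0 [_ Xn_min]; apply/ler_addgt0Pr => e e0.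
have e1 : 0 < e / (t + 1) by rewrite divr_gt0 // ltr_wpDl.
have [_ [Z /= NZ <-] Z_near_sup] := sup_adherent e1 (has_sup_dual_norm G).
have : N (Xo - t *: Z - Xo) <= t.
  by rewrite addrAC subrr add0r is_normN // is_normZ // ger0_norm // ler_piMr.
move=> /Xn_min; rewrite !mulmxBr !linearB /= -scalemxAr mxtraceZ.
have : t * (dual_norm N G - e / (t + 1)) <= t * \tr (G^T *m Z).
  by rewrite ler_wpM2l // ltW.
have : t * (e / (t + 1)) <= e.
  by rewrite mulrCA ger_pMr // ler_pdivrMr ?ltr_wpDl // mul1r lerDl.
lra.
Qed.

End DualNorm.

Section Line.
Variables (R : realType) (p : nat) (m n : 'I_p -> nat).
Local Notation S := (prodS R m n).

Definition line (X D : S) (t : R) : S := fun i => X i + t *: D i.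

Lemma line0 X D : line X D 0 = X.
Proof. by apply: functional_extensionality_dep => i; rewrite /line scale0r addr0. Qed.

Lemma line1 X D : line X D 1 = addS X D.
Proof. by apply: functional_extensionality_dep => i; rewrite /line scale1r. Qed.

Lemma line_shift X D t h :
  addS (line X D t) (fun i => h *: D i) = line X D (h + t).
Proof.
apply: functional_extensionality_dep => i.
by rewrite /addS /line scalerDl [h *: _ + _]addrC addrA.
Qed.

Lemma ipSZr (G D : S) c : ipS G (fun i => c *: D i) = c * ipS G D.
Proof. by rewrite /ipS mulr_sumr; apply: eq_bigr => i _; rewrite -scalemxAr mxtraceZ. Qed.

Lemma nSZ (D : S) c : nS (fun i => c *: D i) = `|c| * nS D.
Proof.
rewrite /nS mulr_sumr; apply: eq_bigr => i _; rewrite mulr_sumr; apply: eq_bigr => k _.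
by rewrite mulr_sumr; apply: eq_bigr => l _; rewrite mxE normrM.
Qed.

Lemma nS_ge0 (D : S) : 0 <= nS D.
Proof. by do 3 (apply: sumr_ge0 => ? _). Qed.

Lemma is_derive_line (f : S -> R) (g : S -> S) (X D : S) (t : R) : is_gradient f g ->
  is_derive t 1 (fun s => f (line X D s)) (ipS (g (line X D t)) D).
Proof.
move=> grad_f.
suff lim_quotient : (fun h => h^-1 *: (f (line X D (h *: 1 + t)) - f (line X D t)))
    @ 0^' --> ipS (g (line X D t)) D.
  by apply: DeriveDef; [apply/cvg_ex; eexists; exact: lim_quotient | exact: cvg_lim].
apply/cvgrPdist_le => e e0.
have nD1 : 0 < nS D + 1 by rewrite ltr_wpDl ?nS_ge0.
have [d d0 Hd] := grad_f (line X D t) (e / (nS D + 1)) (divr_gt0 e0 nD1).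
near=> h.
have h0 : h != 0 by near: h; exact: nbhs_dnbhs_neq.
have hd : `|h| < d / (nS D + 1) by near: h; apply: dnbhs0_lt; exact: divr_gt0.
have := Hd (fun i => h *: D i).
rewrite line_shift ipSZr nSZ [h%:A]mulr1 => /(_ _)/wrap[].
  by rewrite ltr_pdivlMr // in hd; apply: le_lt_trans hd; rewrite ler_wpM2l ?lerDl.
set F := _ - f _; set ip := ipS _ D => hF.
have -> : ip - h^-1 *: F = - h^-1 * (F - h * ip) by rewrite [_ *: _]/GRing.scale /=; field.
rewrite normrM normrN normrV ?unitfE // ler_pdivrMl ?normr_gt0 //.
apply: le_trans hF _; rewrite mulrCA ler_wpM2l // mulrAC ler_pdivrMr //.
by rewrite ler_wpM2l ?lerDl // ltW.
Unshelve. all: by end_near.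
Qed.

End Line.

Lemma is_derive_quadratic (R : realType) (a c t : R) :
  is_derive t 1 (fun s : R => s * a + s ^+ 2 * c) (a + 2 * t * c).
Proof.
by apply: is_derive_eq; rewrite !scaler0 !add0r /GRing.scale /= !mulr1; ring.
Qed.

Section Descent.
Variables (R : realType) (p : nat) (m n : 'I_p -> nat).
Variables (N : forall i : 'I_p, 'M[R]_(m i, n i) -> R)
  (f : prodS R m n -> R) (g : prodS R m n -> prodS R m n) (L0 L1 : 'I_p -> R).
Arguments N : clear implicits.
Hypotheses (normN : forall i, is_norm (N i)) (grad_f : is_gradient f g)
  (smooth_f : layerwise_L0L1_smooth N g L0 L1).
Local Notation S := (prodS R m n).

Definition L0L1_quad (X D : S) : R :=
  \sum_i (L0 i + L1 i * dual_norm (N i) (g X i)) * N i (D i) ^+ 2.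

Lemma ipS_line_grad_le X D t : 0 <= t ->
  ipS (g (line X D t)) D - ipS (g X) D <= t * L0L1_quad X D.
Proof.
move=> t0; rewrite /ipS -sumrB /L0L1_quad mulr_sumr; apply: ler_sum => i _.
rewrite -linearB -mulmxBl -linearB /= -[_ - _]opprB linearN /= mulNmx -mulmxN.
apply: le_trans (mxtrace_le_dual_norm (normN i) _ _) _.
apply: le_trans (ler_wpM2r (is_norm_ge0 (normN i) _) (smooth_f i X (line X D t))) _.
rewrite /line opprD addNKr !is_normN // is_normZ // ger0_norm //.
by rewrite le_eqVlt -!mulrA mulrCA [t * _]mulrC expr2 eqxx.
Qed.

Lemma L0L1_descent X D :
  f (addS X D) <= f X + ipS (g X) D + L0L1_quad X D / 2.
Proof.
set C := L0L1_quad X D; set ip0 := ipS (g X) D.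
pose phi s := f (line X D s) - (s * ip0 + s ^+ 2 * (C / 2)).
have dphi (t : R) : is_derive t 1 phi (ipS (g (line X D t)) D - (ip0 + 2 * t * (C / 2))).
  exact: (is_deriveB (is_derive_line X D t grad_f) (is_derive_quadratic _ _ _)).
have phi_nonincr : {in `[0, 1]%R &, {homo phi : x y /~ x <= y}}.
  apply: ler0_derive1_le_cc => [t _|t|]; first exact: ex_derive.
    rewrite in_itv /= => /andP[t0 _]; rewrite derive1E derive_val.
    by have := ipS_line_grad_le X D (ltW t0); rewrite -/ip0 -/C; lra.
  by apply: derivable_within_continuous => t _; exact: ex_derive.
have := phi_nonincr 1 0; rewrite !in_itv /= !lexx ler01 /phi line0 line1 => /(_ isT isT isT).
lra.
Qed.

End Descent.

Lemma lmo_step_gluon_radius (R : realType) a b (N : 'M[R]_(a, b) -> R)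
  (G Xo Xn : 'M[R]_(a, b)) (l0 l1 : R) :
  is_norm N -> 0 <= l0 -> 0 < l1 ->
  lmo_step N G Xo Xn (gluon_radius N G l0 l1) ->
  \tr (G^T *m (Xn - Xo)) + (l0 + l1 * dual_norm N G) * N (Xn - Xo) ^+ 2 / 2
    <= - (dual_norm N G ^+ 2 / (l0 + l1 * dual_norm N G) / 2).
Proof.
move=> normN l0_ge0 l1_gt0 step.
set t := gluon_radius _ _ _ _ in step; set d := dual_norm N G.
set l := l0 + l1 * d.
have d0 : 0 <= d := dual_norm_ge0 normN G.
have l_ge0 : 0 <= l by rewrite addr_ge0 // mulr_ge0 // ltW.
have t0 : 0 <= t by rewrite /t /gluon_radius; case: ifP => // _; rewrite divr_ge0.
have lin := lmo_step_mxtrace normN t0 step.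
have quad : l * N (Xn - Xo) ^+ 2 / 2 <= l * t ^+ 2 / 2.
  case: step => Nt _; rewrite ler_pM2r ?invr_gt0 // ler_wpM2l // !expr2.
  by rewrite ler_pM // is_norm_ge0.
apply: le_trans (lerD lin quad) _; rewrite /t /gluon_radius -/d -/l.
case: ifP => [/eqP G0|_].
  by rewrite /d G0 dual_norm0 // !mul0r expr0n /= !mulr0 !mul0r oppr0 addr0.
have [->|l_neq0] := eqVneq l 0; first by rewrite invr0 !(mulr0, mul0r) oppr0 addr0.
by rewrite le_eqVlt; apply/orP; left; apply/eqP; field.
Qed.

Lemma ler_sqr_div (R : realFieldType) (x y mu : R) : 0 <= y -> (y = 0 -> x = 0) ->
  2 * mu * x - mu ^+ 2 * y <= x ^+ 2 / y.
Proof.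
move=> y0 y0_x0; have [y00|y_neq0] := eqVneq y 0.
  by rewrite y00 (y0_x0 y00) !mulr0 subrr expr0n /= mul0r.
have : 0 <= (x - mu * y) ^+ 2 / y by rewrite divr_ge0 // sqr_ge0.
have -> : (x - mu * y) ^+ 2 / y = x ^+ 2 / y - (2 * mu * x - mu ^+ 2 * y).
  by field.
by rewrite subr_ge0.
Qed.

(* ler_sqr_div at mu_i = lambda / l1_i, lambda = s / (A + s), A = sum_i l0_i / l1_i^2. *)
Lemma sum_sqr_div_gt (R : realFieldType) (I : finType) (x l0 l1 : I -> R) (s : R) :
  (forall i, 0 <= x i) -> (forall i, 0 <= l0 i) -> (forall i, 0 < l1 i) -> 0 < s ->
  s < \sum_i x i / l1 i ->
  s ^+ 2 / (\sum_i l0 i / l1 i ^+ 2 + s) < \sum_i x i ^+ 2 / (l0 i + l1 i * x i).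
Proof.
move=> x0 l00 l10 s0 sT.
set A := \sum_i _ / _ ^+ 2; set T := \sum_i _ / _ in sT.
have A0 : 0 <= A by apply: sumr_ge0 => i _; rewrite divr_ge0 // ltW // exprn_gt0.
have As : 0 < A + s by rewrite ltr_wpDl.
set lam := s / (A + s).
have lam0 : 0 < lam by rewrite divr_gt0.
have lam1 : lam <= 1 by rewrite ler_pdivrMr // mul1r lerDr.
have tangent : (2 * lam - lam ^+ 2) * T - lam ^+ 2 * A <=
    \sum_i x i ^+ 2 / (l0 i + l1 i * x i).
  have -> : (2 * lam - lam ^+ 2) * T - lam ^+ 2 * A =
      \sum_i (2 * (lam / l1 i) * x i - (lam / l1 i) ^+ 2 * (l0 i + l1 i * x i)).
    rewrite /T /A !mulr_sumr -sumrB; apply: eq_bigr => i _.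
    by field; rewrite gt_eqF.
  apply: ler_sum => i _; apply: ler_sqr_div.
    by rewrite addr_ge0 // mulr_ge0 // ltW.
  move=> /eqP; rewrite paddr_eq0 ?mulr_ge0 // ?ltW // => /andP[_].
  by rewrite mulf_eq0 gt_eqF //= => /eqP.
apply: lt_le_trans tangent.
have -> : s ^+ 2 / (A + s) = (2 * lam - lam ^+ 2) * s - lam ^+ 2 * A.
  by rewrite /lam; field; rewrite gt_eqF.
rewrite ltrD2r ltr_pM2l //.
have -> : 2 * lam - lam ^+ 2 = lam * (2 - lam) by ring.
by rewrite mulr_gt0 // subr_gt0; lra.
Qed.

Lemma telescope_lt (R : realDomainType) (u : nat -> R) (c : R) (K : nat) :
  (forall k, (k < K)%N -> u k.+1 + c < u k) -> (0 < K)%N ->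
  u K + K%:R * c < u 0%N.
Proof.
elim: K => [//|K IH] u_dec _; rewrite -natr1 mulrDl mul1r.
have uK := u_dec K (ltnSn K).
case: K IH u_dec uK => [|K] IH u_dec uK; first by rewrite mul0r add0r.
have := IH (fun k hk => u_dec k (ltnW hk)) isT; lra.
Qed.

Lemma gluon_iteration_bound_eq (R : realFieldType) (D A H e : R) :
  0 <= A -> 0 < H -> 0 < e ->
  2 * D * A / (e ^+ 2 * H ^+ 2) + 2 * D / (e * H) = D / ((H * e) ^+ 2 / (A + H * e) / 2).
Proof.
move=> A0 H0 e0; have AHe : 0 < A + H * e by rewrite ltr_wpDl ?mulr_gt0.
by field; rewrite !gt_eqF ?mulr_gt0.
Qed.

Section Gluon.
Variables (R : realType) (p : nat) (m n : 'I_p -> nat)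
  (N : forall i : 'I_p, 'M[R]_(m i, n i) -> R)
  (f : prodS R m n -> R) (g : prodS R m n -> prodS R m n)
  (L0 L1 : 'I_p -> R) (Xs : nat -> prodS R m n).
Arguments N : clear implicits.
Hypotheses (normN : forall i, is_norm (N i)) (grad_f : is_gradient f g)
  (L0_ge0 : forall i, 0 <= L0 i) (L1_gt0 : forall i, 0 < L1 i)
  (smooth_f : layerwise_L0L1_smooth N g L0 L1) (iter : gluon_iterates N g L0 L1 Xs).

Lemma gluon_step_decrease k :
  f (Xs k.+1) <= f (Xs k) -
    (\sum_i dual_norm (N i) (g (Xs k) i) ^+ 2 /
        (L0 i + L1 i * dual_norm (N i) (g (Xs k) i))) / 2.
Proof.
pose D : prodS R m n := subS (Xs k.+1) (Xs k).
have -> : Xs k.+1 = addS (Xs k) D.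
  by apply: functional_extensionality_dep => i; rewrite /addS /D /subS addrC subrK.
apply: le_trans (L0L1_descent normN grad_f smooth_f _ _) _.
rewrite -addrA lerD2l /ipS /L0L1_quad !mulr_suml -big_split -sumrN /=.
apply: ler_sum => i _.
exact: lmo_step_gluon_radius (L1_gt0 i) (iter k i).
Qed.

Lemma gluon_sufficient_decrease k (H eps : R) : 0 < H -> 0 < eps ->
  eps < \sum_i ((L1 i)^-1 / H) * dual_norm (N i) (g (Xs k) i) ->
  f (Xs k.+1) + (H * eps) ^+ 2 / (\sum_i L0 i / L1 i ^+ 2 + H * eps) / 2 < f (Xs k).
Proof.
move=> H0 eps0 large.
set a := fun i => dual_norm (N i) (g (Xs k) i).
have weighted : H * eps < \sum_i a i / L1 i.
  rewrite mulrC -ltr_pdivlMr // mulr_suml.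
  by under eq_bigr => i _ do rewrite -mulrA mulrC.
have := gluon_step_decrease k.
have := sum_sqr_div_gt (fun i => dual_norm_ge0 (normN i) _) L0_ge0 L1_gt0
  (mulr_gt0 H0 eps0) weighted.
lra.
Qed.

End Gluon.

Theorem theorem1 (R : realType) (p : nat) (m n : 'I_p -> nat)
  (N : forall i : 'I_p, 'M[R]_(m i, n i) -> R)
  (f : prodS R m n -> R) (g : prodS R m n -> prodS R m n)
  (L0 L1 : 'I_p -> R) (eps : R) (Xs : nat -> prodS R m n) :
  (forall i, is_norm (N i)) ->
  C1_with_gradient f g ->
  (exists c : R, forall X, c <= f X) ->
  (forall i, 0 <= L0 i) ->
  (forall i, 0 < L1 i) ->
  layerwise_L0L1_smooth N g L0 L1 ->
  0 < eps ->
  gluon_iterates N g L0 L1 Xs ->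
  let Delta0 := f (Xs 0%N) - inf (range f) in
  let H := (\sum_(j < p) (L1 j)^-1) / p%:R in
  let K := Num.ceil (2 * Delta0 * (\sum_(i < p) L0 i / (L1 i ^+ 2)) / (eps ^+ 2 * H ^+ 2)
                     + 2 * Delta0 / (eps * H)) in
  (1 <= K)%R ->
  exists k : nat, (k%:Z < K)%R /\
    \sum_(i < p) ((L1 i)^-1 / H) * dual_norm (N i) (g (Xs k) i) <= eps.
Proof.
move=> normN [grad_f _] [lo f_ge] L0_ge0 L1_gt0 smooth_f eps0 iter Delta0 H K K1.
have H0 : 0 < H.
  have H_ge0 : 0 <= H by rewrite divr_ge0 // sumr_ge0 // => i _; rewrite invr_ge0 ltW.
  rewrite lt_def H_ge0 andbT; apply: contraTneq K1 => H0.
  by rewrite /K H0 !(expr0n, mulr0, invr0, addr0) ceil0.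
have [Kn K_Kn] : exists Kn : nat, K = Kn%:Z by exists `|K|%N; rewrite gez0_abs // (le_trans _ K1).
have A0 : 0 <= \sum_(i < p) L0 i / L1 i ^+ 2.
  by apply: sumr_ge0 => i _; rewrite divr_ge0 ?sqr_ge0.
pose c := (H * eps) ^+ 2 / (\sum_(i < p) L0 i / L1 i ^+ 2 + H * eps) / 2.
have Heps : 0 < H * eps := mulr_gt0 H0 eps0.
have c0 : 0 < c by rewrite /c !divr_gt0 ?exprn_gt0 ?ltr_wpDl.
have Delta0_le : Delta0 <= Kn%:R * c.
  rewrite -ler_pdivrMr // /c -gluon_iteration_bound_eq //.
  by apply: le_trans (Num.Theory.ceil_ge _) _; rewrite -/K K_Kn.
apply: contrapT => no_k.
have step k : (k < Kn)%N -> f (Xs k.+1) + c < f (Xs k).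
  move=> kK; apply: (gluon_sufficient_decrease normN grad_f L0_ge0 L1_gt0 smooth_f iter) => //.
  by rewrite ltNge; apply/negP => small; apply: no_k; exists k; rewrite K_Kn ltz_nat.
have Kn_gt0 : (0 < Kn)%N by rewrite -(ltz_nat 0) -K_Kn.
have := telescope_lt step Kn_gt0.
have : inf (range f) <= f (Xs Kn).
  by apply: ge_inf; [exists lo => _ [X _ <-]; exact: f_ge | exists (Xs Kn)].
rewrite /Delta0 in Delta0_le; lra.
Qed.
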